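(* Let $w\in\mathbb R^m_{++}$ with $\sum_iw_i=1$, $x=x(w)$, $y=y(w)$, $\delta_i=w_i/(y_i\|\Delta b_i\|_1)$, and let $\tilde b_i=b_i^{(0)}+\sum_{l=1}^{N_i}\Delta b_i^l\tilde z_i^l$ with $\tilde z_i^1,\dots,\tilde z_i^{N_i}$ independent, symmetrically distributed random variables in $[-1,1]$. Let $\max(\Delta b_i)$ be the largest entry of $\Delta b_i$. Then $$\Pr\{\langle a_i,x\rangle>\tilde b_i\}\le B\Bigl(N_i,\ \delta_i\frac{\|\Delta b_i\|_1}{\max(\Delta b_i)}\Bigr),$$ where for $N\in\mathbb N$, $p>0$: $B(N,p)=2^{-N}\bigl[(1-\mu)\binom{N}{\lfloor\nu\rfloor}+\sum_{k=\lfloor\nu\rfloor+1}^{N}\binom{N}{k}\bigr]$ with $\nu=(N+p)/2$, $\mu=\nu-\lfloor\nu\rfloor$.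
   Context: $A\in\mathbb R^{m\times n}$ (rows $a_i^\top$) has full column rank $n\le m$, $b^{(0)}\in\mathbb R^m$, and $\{x:Ax\le b^{(0)}\}$ is bounded with nonempty interior. For $w\in\mathbb R^m_{++}$, the weighted center $(x(w),y(w),s(w))$ is the unique solution of $Ax+s=b^{(0)}$, $s>0$, $A^\top y=0$, $\mathrm{Diag}(s)y=w$. $\Delta b_i=(\Delta b_i^1,\dots,\Delta b_i^{N_i})$ is a nonzero vector with nonnegative entries. *)

From HB Require Import structures.
From mathcomp Require Import all_boot all_order all_algebra.
From mathcomp Require Import all_classical all_reals all_analysis.
Set Implicit Arguments. Unset Strict Implicit. Unset Printing Implicit Defensive.
Import Order.TTheory GRing.Theory Num.Theory.
Local Open Scope ring_scope.
Local Open Scope classical_set_scope.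

Definition poly_bounded (R : realType) m n (A : 'M[R]_(m, n)) (b : 'cV[R]_m) :=
  exists M : R, forall x : 'cV[R]_n,
    (forall i, (A *m x) i 0 <= b i 0) -> forall j, `|x j 0| <= M.

Definition poly_nonempty_interior (R : realType) m n (A : 'M[R]_(m, n)) (b : 'cV[R]_m) :=
  exists (x0 : 'cV[R]_n) (eps : R), 0 < eps /\
    forall x : 'cV[R]_n, (forall j, `|x j 0 - x0 j 0| < eps) ->
      forall i, (A *m x) i 0 <= b i 0.

Definition weighted_center (R : realType) m n (A : 'M[R]_(m, n)) (b w : 'cV[R]_m)
  (x : 'cV[R]_n) (y s : 'cV[R]_m) :=
  [/\ A *m x + s = b, (forall i, 0 < s i 0), A^T *m y = 0 &
      forall i, s i 0 * y i 0 = w i 0].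

(* B(N,p) = 2^{-N} [ (1-mu) C(N, floor nu) + sum_{k=floor nu + 1}^N C(N,k) ],
   nu = (N+p)/2, mu = nu - floor nu  (nu > 0 for p > 0, so truncn = floor) *)
Definition Bbound (R : realType) (N : nat) (p : R) : R :=
  let nu := (N%:R + p) / 2 in
  let k0 := Num.truncn nu in
  let mu := nu - k0%:R in
  (2 ^- N) * ((1 - mu) * ('C(N, k0))%:R
              + \sum_(k0.+1 <= k < N.+1) ('C(N, k))%:R).

Definition mutually_independent (R : realType) d (T : measurableType d)
  (P : probability T R) (N : nat) (z : 'I_N -> {RV P >-> R}) :=
  forall (J : {set 'I_N}) (B : 'I_N -> set R),
    (forall l, measurable (B l)) ->
    P (\bigcap_(l in [set l | l \in J]) (z l @^-1` B l)) =
    (\prod_(l in J) P (z l @^-1` B l))%E.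

Definition symmetric_rv (R : realType) d (T : measurableType d)
  (P : probability T R) (Z : {RV P >-> R}) :=
  forall B : set R, measurable B ->
    P (Z @^-1` B) = P ((fun t => - Z t) @^-1` B).

Definition norm1 (R : realType) N (v : 'I_N -> R) : R := \sum_(l < N) `|v l|.
Definition maxentry (R : realType) N (v : 'I_N -> R) : R := \big[Num.max/0]_(l < N) v l.

(** Put [c_l = db_l / max db], so that the event reads [sum_l c_l z_l < -p]
    with [p = s_i / max db] and [0 <= c_l <= 1].  By independence and
    symmetry, flipping the signs of any subset of the [z_l] does not change
    the law of [(z_l)_l] on boxes, hence (Dynkin) on the half-spaces generated
    by boxes; so the event has the same probability for each of the [2^N] sign
    patterns [e], and [2^N P(E)] is the expected number of patterns [e] with
    [sum_l e_l c_l z_l < -p].  The theorem thus reduces to a deterministic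
    count: for [|a_l| <= 1], at most [2^N B(N, p)] sign vectors [e] satisfy
    [sum_l e_l a_l > p].  This is proved by induction on [N], through a
    piecewise-linear interpolation of [2^N B(N, .)] which satisfies Pascal's
    recursion and is midpoint-convex on [[1, +oo)]. *)

From HB Require Import structures.
From mathcomp Require Import all_boot all_order all_algebra.
From mathcomp Require Import all_classical all_reals all_analysis.
From mathcomp Require Import measurable_realfun ring lra zify.
Import Order.TTheory GRing.Theory Num.Theory.
Local Open Scope ring_scope.
Local Open Scope classical_set_scope.

Set Implicit Arguments. Unset Strict Implicit. Unset Printing Implicit Defensive.

Section BinomialTail.
Variable R : realType.
Implicit Types x q t : R.

Definition ramp x : R := Num.max 0 x.
Definition clamp01 x : R := Num.min 1 (Num.max 0 x).

(* For [q >= 0] this is [2^n B(n, q)] (lemma [Bbound_binom_tail]); unlike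
   [B], it is defined for every real [q]. *)
Definition binom_tail (n : nat) q : R :=
  \sum_(k < n.+1) 'C(n, k)%:R * clamp01 (k%:R + 1 - (n%:R + q) / 2).

Lemma clamp01_ge0 x : 0 <= clamp01 x.
Proof. by rewrite /clamp01 minEle maxEle; repeat case: ifP; lra. Qed.

Lemma clamp01_le0 x : x <= 0 -> clamp01 x = 0.
Proof. by rewrite /clamp01 minEle maxEle; repeat case: ifP; lra. Qed.

Lemma clamp01_ge1 x : 1 <= x -> clamp01 x = 1.
Proof. by rewrite /clamp01 minEle maxEle; repeat case: ifP; lra. Qed.

Lemma clamp01_id x : 0 <= x <= 1 -> clamp01 x = x.
Proof. by rewrite /clamp01 minEle maxEle; repeat case: ifP; lra. Qed.

Lemma clamp01_ramp x : clamp01 x = ramp x - ramp (x - 1).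
Proof. by rewrite /clamp01 /ramp minEle !maxEle; repeat case: ifP; lra. Qed.

Lemma clamp01D_ge1 x t : 1 <= x + t -> 1 <= clamp01 x + clamp01 t.
Proof. by rewrite /clamp01 !minEle !maxEle; repeat case: ifP; lra. Qed.

Lemma ramp_le0 x : x <= 0 -> ramp x = 0.
Proof. by rewrite /ramp maxEle; case: ifP; lra. Qed.

(* The equations let callers supply the four arguments in any syntactic form. *)
Lemma ramp_spread_le x d a b a' b' : 0 <= d <= 1/2 ->
  a = x + d -> b = x - d -> a' = x + 1/2 -> b' = x - 1/2 ->
  ramp a + ramp b <= ramp a' + ramp b'.
Proof. by move=> hd -> -> -> ->; rewrite /ramp !maxEle; repeat case: ifP; lra. Qed.

Lemma binom_tail_ge0 n q : 0 <= binom_tail n q.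
Proof. by apply: sumr_ge0 => k _; rewrite mulr_ge0 ?ler0n ?clamp01_ge0. Qed.

Lemma binom_tailS n q :
  binom_tail n.+1 q = binom_tail n (q - 1) + binom_tail n (q + 1).
Proof.
rewrite /binom_tail big_ord_recl /=.
under eq_bigr => k _ do rewrite binS natrD mulrDl.
rewrite big_split /= addrA [RHS]addrC; congr (_ + _); last first.
  apply: eq_bigr => k _; congr (_ * clamp01 _).
  by rewrite /bump /= -[k.+1%:R]natr1 -[n.+1%:R]natr1; lra.
rewrite big_ord_recr /= [RHS]big_ord_recl /= (bin_small (ltnSn n)).
rewrite mul0r addr0 !bin0; congr (_ + _).
  by congr (_ * clamp01 _); rewrite -[n.+1%:R]natr1; lra.
apply: eq_bigr => k _; congr (_ * clamp01 _).
by rewrite /bump /= -[k.+1%:R]natr1 -[n.+1%:R]natr1; lra.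
Qed.

(* Pairing [k] with [n - k] makes the clamped arguments sum to [2 - q >= 1]. *)
Lemma binom_tail_ge_half n q : 0 <= q <= 1 -> 2 ^+ n <= 2 * binom_tail n q.
Proof.
move=> hq.
have sum_binom : 2 ^+ n = \sum_(k < n.+1) 'C(n, k)%:R :> R.
  rewrite -natrX (expnDn 1 1 n) natr_sum; apply: eq_bigr => k _.
  by rewrite !exp1n !muln1.
have binom_tail_rev : binom_tail n q =
    \sum_(k < n.+1) 'C(n, k)%:R * clamp01 ((n - k)%:R + 1 - (n%:R + q) / 2).
  rewrite /binom_tail -(big_mkord xpredT
    (fun k => 'C(n, k)%:R * clamp01 (k%:R + 1 - (n%:R + q) / 2))).
  rewrite big_rev_mkord subn0; apply: eq_bigr => k _; rewrite subSS bin_sub //.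
  exact: leq_ord.
rewrite sum_binom mulr2n mulrDl mul1r {2}binom_tail_rev /binom_tail -big_split /=.
apply: ler_sum => k _; rewrite -mulrDr -[X in X <= _]mulr1.
apply: ler_wpM2l; first exact: ler0n.
by apply: clamp01D_ge1; rewrite natrB ?leq_ord //; lra.
Qed.

Definition backward_diff (c : nat -> R) (k : nat) : R :=
  (if k is j.+1 then c j else 0) - c k.

Lemma sum_by_parts (c g : nat -> R) m :
  \sum_(k < m.+1) c k * (g k.+1 - g k) =
  \sum_(k < m.+1) backward_diff c k * g k + c m * g m.+1.
Proof.
elim: m => [|m IH]; first by rewrite !big_ord_recl !big_ord0 /= /backward_diff; lra.
by rewrite big_ord_recr /= IH [in RHS]big_ord_recr /= /backward_diff; lra.
Qed.

Lemma leq_bin_pred n k : (n < k.*2)%N -> ('C(n, k) <= 'C(n, k.-1))%N.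
Proof.
case: k => [//|k] /= hk.
have hnk : (n - k <= k.+1)%N by rewrite leq_subLR; move: hk; rewrite doubleS; lia.
by rewrite -(@leq_pmul2l k.+1) // mul_bin_left leq_mul2r hnk orbT.
Qed.

Lemma binom_tail_ramp n q : binom_tail n q =
  \sum_(k < n.+1) backward_diff (fun k => 'C(n, k)%:R) k * ramp (k%:R - (n%:R + q) / 2)
  + 'C(n, n)%:R * ramp (n.+1%:R - (n%:R + q) / 2).
Proof.
rewrite -(sum_by_parts _ (fun k : nat => ramp (k%:R - (n%:R + q) / 2))).
apply: eq_bigr => k _; rewrite clamp01_ramp -[k.+1%:R]natr1.
by congr (_ * (ramp _ - ramp _)); lra.
Qed.

(* In the form [binom_tail_ramp], the weights are nonnegative exactly where
   the ramps can be nonzero: binomial coefficients decrease past [n/2]. *)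
Lemma binom_tail_spread_le n q t : 1 <= q -> 0 <= t <= 1 ->
  binom_tail n (q - t) + binom_tail n (q + t) <=
  binom_tail n (q - 1) + binom_tail n (q + 1).
Proof.
move=> hq ht; rewrite !binom_tail_ramp.
set c := (fun k => 'C(n, k)%:R) : nat -> R.
have inner_le :
    \sum_(k < n.+1) backward_diff c k * ramp (k%:R - (n%:R + (q - t)) / 2) +
    \sum_(k < n.+1) backward_diff c k * ramp (k%:R - (n%:R + (q + t)) / 2) <=
    \sum_(k < n.+1) backward_diff c k * ramp (k%:R - (n%:R + (q - 1)) / 2) +
    \sum_(k < n.+1) backward_diff c k * ramp (k%:R - (n%:R + (q + 1)) / 2).
  rewrite -!big_split /=; apply: ler_sum => k _; rewrite -!mulrDr.
  case: (leqP k.*2 n) => hk.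
    have hk' : k%:R * 2 <= n%:R :> R by rewrite -(ler_nat R) -addnn natrD in hk; lra.
    by rewrite !ramp_le0 //; lra.
  apply: ler_wpM2l.
    rewrite /backward_diff /c; case: (nat_of_ord k) hk => [|j] hj /=.
      by rewrite double0 ltn0 in hj.
    by rewrite subr_ge0 ler_nat; exact: leq_bin_pred hj.
  by apply: (ramp_spread_le (x := k%:R - (n%:R + q) / 2) (d := t / 2)); lra.
have last_le :
    c n * ramp (n.+1%:R - (n%:R + (q - t)) / 2) + c n * ramp (n.+1%:R - (n%:R + (q + t)) / 2)
    <= c n * ramp (n.+1%:R - (n%:R + (q - 1)) / 2) + c n * ramp (n.+1%:R - (n%:R + (q + 1)) / 2).
  rewrite -!mulrDr; apply: ler_wpM2l; first exact: ler0n.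
  by apply: (ramp_spread_le (x := n.+1%:R - (n%:R + q) / 2) (d := t / 2)); lra.
by move: inner_le last_le; rewrite /c; lra.
Qed.

Lemma Bbound_binom_tail n p : 0 <= p -> Bbound n p = binom_tail n p / 2 ^+ n.
Proof.
move=> hp; rewrite /Bbound /= mulrC; congr (_ / _).
set nu := (n%:R + p) / 2.
have /andP [nu_ge nu_lt] : (Num.truncn nu)%:R <= nu < (Num.truncn nu).+1%:R.
  by apply: truncn_itv; have := ler0n R n; rewrite /nu; lra.
set k0 := Num.truncn nu in nu_ge nu_lt *; rewrite -natr1 in nu_lt.
have termE (k : 'I_n.+1) : 'C(n, k)%:R * clamp01 (k%:R + 1 - nu) =
    (if k == k0 :> nat then (1 - (nu - k0%:R)) * 'C(n, k0)%:R else 0) +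
    (if (k0 < k)%N then 'C(n, k)%:R else 0).
  case: (ltngtP k k0) => hk.
  - have : (k.+1 <= k0)%N by []; rewrite -(ler_nat R) -natr1 => hk'.
    by rewrite clamp01_le0 ?mulr0 ?addr0 //; lra.
  - have : (k0.+1 <= k)%N by []; rewrite -(ler_nat R) -natr1 => hk'.
    by rewrite clamp01_ge1 ?mulr1 ?add0r //; lra.
  - rewrite hk addr0 clamp01_id; last lra.
    by rewrite mulrC; congr (_ * _); lra.
rewrite /binom_tail (eq_bigr _ (fun k _ => termE k)) big_split /=.
set X := (1 - (nu - k0%:R)) * 'C(n, k0)%:R.
have -> : \sum_(k < n.+1) (if k == k0 :> nat then X else 0) = if (k0 < n.+1)%N then X else 0.
  by rewrite -big_mkcond (big_ord1_eq _ (fun _ => X)).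
rewrite big_geq_mkord big_mkcond.
case: ifP => // /negbT; rewrite -leqNgt => hk.
by rewrite /X bin_small // mulr0.
Qed.

End BinomialTail.

Section SignVectors.
Variable R : realType.
Implicit Types (s : seq R) (P : pred R).

Fixpoint sign_count s P : nat :=
  if s is a :: s' then
    addn (sign_count s' (fun v => P (a + v))) (sign_count s' (fun v => P (- a + v)))
  else P 0.

Fixpoint sign_vectors (n : nat) : seq (seq R) :=
  if n is n'.+1 then
    [seq 1 :: e | e <- sign_vectors n'] ++ [seq -1 :: e | e <- sign_vectors n']
  else [:: [::]].

Lemma size_sign_vectors n : size (sign_vectors n) = (2 ^ n)%N.
Proof. by elim: n => //= n IH; rewrite size_cat !size_map IH expnS mul2n addnn. Qed.

Lemma sign_vectorsP n e : e \in sign_vectors n ->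
  size e = n /\ forall k, (k < n)%N -> nth 0 e k = 1 \/ nth 0 e k = -1.
Proof.
elim: n e => [|n IH] e /=; first by rewrite inE => /eqP ->.
rewrite mem_cat => /orP [] /mapP [e' /IH [size_e' pm_e'] ->].
  by split=> [|[|k] hk]; [rewrite /= size_e' | left | exact: pm_e'].
by split=> [|[|k] hk]; [rewrite /= size_e' | right | exact: pm_e'].
Qed.

Lemma sign_countE s P : sign_count s P =
  count (fun e => P (\sum_(0 <= k < size s) nth 0 e k * nth 0 s k))
        (sign_vectors (size s)).
Proof.
elim: s P => [|a s IH] P /=; first by rewrite big_geq // addn0.
rewrite count_cat !count_map !IH; congr addn; apply: eq_count => e /=;
by rewrite big_nat_recl //= ?mul1r ?mulN1r.
Qed.

Lemma eq_sign_count s P P' : P =1 P' -> sign_count s P = sign_count s P'.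
Proof.
elim: s P P' => [|a s IH] P P' eqP /=; first by rewrite eqP.
by congr addn; apply: IH => v; exact: eqP.
Qed.

Lemma sign_count_disjoint s P P' : (forall v, P v -> P' v -> False) ->
  (sign_count s P + sign_count s P' <= 2 ^ size s)%N.
Proof.
elim: s P P' => [|a s IH] P P' disj /=.
  by have := disj 0; case: (P 0); case: (P' 0) => //= H; case: H.
have := IH (fun v => P (a + v)) (fun v => P' (a + v)) (fun v => disj _).
have := IH (fun v => P (- a + v)) (fun v => P' (- a + v)) (fun v => disj _).
by rewrite expnS; lia.
Qed.

Lemma sign_count_opp s P : sign_count s P = sign_count s (fun v => P (- v)).
Proof.
elim: s P => [|a s IH] P /=; first by rewrite oppr0.
rewrite (IH (fun v => P (a + v))) (IH (fun v => P (- a + v))) addnC.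
by congr addn; apply: eq_sign_count => v; rewrite opprD ?opprK.
Qed.

(* For [p <= 1] the sign patterns with sum above [p] and below [-p] are
   disjoint and equinumerous; for [p > 1], recurse on the first entry and
   use [binom_tail_spread_le] to absorb its value [|a| <= 1]. *)
Lemma sign_count_gt_le s p : (forall a, a \in s -> `|a| <= 1) -> 0 <= p ->
  (sign_count s (fun v => p < v))%:R <= binom_tail (size s) p.
Proof.
elim: s p => [|a s IH] p hs hp.
  by rewrite /= ltNge hp /=; exact: binom_tail_ge0.
case: (lerP p 1) => hp1.
  have half := @binom_tail_ge_half R (size (a :: s)) p ltac:(lra).
  have disj := @sign_count_disjoint (a :: s) (fun v => p < v) (fun v => v < - p).
  have opp_eq : sign_count (a :: s) (fun v => v < - p) = sign_count (a :: s) (fun v => p < v).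
    by rewrite sign_count_opp; apply: eq_sign_count => v; rewrite ltrN2.
  rewrite opp_eq in disj.
  set k := sign_count (a :: s) (fun v => p < v) in disj *.
  have : (k + k)%:R <= (2 ^ size (a :: s))%:R :> R.
    by rewrite ler_nat; apply: disj => v; lra.
  by rewrite natrD natrX; move: half; lra.
have [ha_lo ha_hi] : - 1 <= a /\ a <= 1.
  by apply/andP; rewrite -ler_norml; apply: hs; rewrite mem_head.
have hs' b : b \in s -> `|b| <= 1 by move=> hb; apply: hs; rewrite in_cons hb orbT.
rewrite /= natrD binom_tailS.
rewrite (@eq_sign_count _ _ (fun v => p - a < v)); last by move=> v; rewrite ltrBlDl.
rewrite (@eq_sign_count s (fun v => p < - a + v) (fun v => p + a < v)); last first.
  by move=> v; rewrite -ltrBlDl opprK.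
have := IH (p - a) hs' ltac:(lra); have := IH (p + a) hs' ltac:(lra).
case: (lerP 0 a) => ha0.
  by have := binom_tail_spread_le (size s) (q := p) (t := a) ltac:(lra) ltac:(lra); lra.
have := binom_tail_spread_le (size s) (q := p) (t := - a) ltac:(lra) ltac:(lra).
by rewrite !opprK; lra.
Qed.

Lemma count_sign_vectors_gt_le n (a : 'I_n -> R) p :
  (forall l, `|a l| <= 1) -> 0 <= p ->
  (count (fun e => p < \sum_(l < n) nth 0 e l * a l) (sign_vectors n))%:R
    <= binom_tail n p.
Proof.
move=> ha hp; set s := [seq a l | l <- enum 'I_n].
have size_s : size s = n by rewrite size_map size_enum_ord.
have nth_s (l : 'I_n) : nth 0 s l = a l.
  by rewrite (nth_map l) ?nth_ord_enum // size_enum_ord.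
have := @sign_count_gt_le s p; rewrite sign_countE size_s.
rewrite (eq_count (a2 := fun e => p < \sum_(l < n) nth 0 e l * a l)); last first.
  move=> e /=; rewrite big_mkord; congr (_ < _).
  by apply: eq_bigr => l _; congr (_ * _); exact: nth_s.
by apply=> // _ /mapP [l _ ->].
Qed.

End SignVectors.

Lemma measurable_lt_set (R : realType) (r : R) : measurable [set x : R | x < r].
Proof. by have := @measurable_itv R `]-oo, r[%R; rewrite set_itvE. Qed.

Lemma measurable_gt_set (R : realType) (r : R) : measurable [set x : R | r < x].
Proof. by have := @measurable_itv R `]r, +oo[%R; rewrite set_itvE. Qed.

Lemma trivIset_preimage (T U : Type) (f : T -> U) (F : nat -> set U) :
  trivIset setT F -> trivIset setT (fun k => f @^-1` F k).
Proof. by move=> tF i j _ _ [t [h1 h2]]; apply: tF => //; exists (f t). Qed.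

Section SignFlip.
Variables (R : realType) (d : measure_display) (T : measurableType d).
Variables (P : probability T R) (n : nat) (z : 'I_n -> {RV P >-> R}).
Hypothesis z_indep : mutually_independent z.
Hypothesis z_sym : forall l, symmetric_rv (z l).
Variable sg : 'I_n -> R.
Hypothesis sg_pm : forall l, sg l = 1 \/ sg l = -1.

Let Z (t : T) : 'I_n -> R := fun l => z l t.
Let Zsg (t : T) : 'I_n -> R := fun l => sg l * z l t.
Let box (r : 'I_n -> R) : set ('I_n -> R) := [set f | forall l, f l < r l].
Let boxes := [set B | exists r, B = box r].
Let flip_invariant := [set V : set ('I_n -> R) | [/\ measurable (Z @^-1` V),
   measurable (Zsg @^-1` V) & P (Z @^-1` V) = P (Zsg @^-1` V)]].

Let flipped_ray (r : 'I_n -> R) (l : 'I_n) : set R :=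
  if sg l == 1 then [set x | x < r l] else [set x | - r l < x].

Let measurable_flipped_ray r l : measurable (flipped_ray r l).
Proof.
by rewrite /flipped_ray; case: ifP => _; [exact: measurable_lt_set | exact: measurable_gt_set].
Qed.

Let preimage_box r : Z @^-1` box r =
  \bigcap_(l in [set l | l \in [set: 'I_n]%SET]) (z l @^-1` [set x | x < r l]).
Proof.
by apply/seteqP; split => t /= h l; [move=> _; exact: h | apply: h; rewrite /= ?inE].
Qed.

Let preimage_flipped_box r : Zsg @^-1` box r =
  \bigcap_(l in [set l | l \in [set: 'I_n]%SET]) (z l @^-1` flipped_ray r l).
Proof.
have flipE t l : (sg l * z l t < r l : Prop) = flipped_ray r l (z l t).
  rewrite /flipped_ray; case: (sg_pm l) => ->; rewrite ?eqxx ?mul1r //.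
  rewrite lt_eqF; last lra.
  by rewrite mulN1r /= ltrNl.
apply/seteqP; split => t /= h l.
  by move=> _; have := h l; rewrite /Zsg flipE.
by rewrite /Zsg flipE; apply: h; rewrite /= ?inE.
Qed.

Let boxes_flip_invariant : boxes `<=` flip_invariant.
Proof.
move=> _ [r ->]; split.
- rewrite preimage_box; apply: fin_bigcap_measurable; first exact: finite_finset.
  by move=> l _; apply: measurable_funPTI; exact: measurable_lt_set.
- rewrite preimage_flipped_box; apply: fin_bigcap_measurable; first exact: finite_finset.
  by move=> l _; apply: measurable_funPTI; exact: measurable_flipped_ray.
rewrite preimage_box preimage_flipped_box.
rewrite (z_indep _ (fun l => measurable_lt_set (r l))) (z_indep _ (measurable_flipped_ray r)).
apply: eq_bigr => l _; rewrite /flipped_ray; case: (sg_pm l) => ->; rewrite ?eqxx //.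
rewrite lt_eqF; last by lra.
rewrite (z_sym l (measurable_lt_set (r l))); congr (P _).
by apply/seteqP; split => t /=; rewrite ltrNl.
Qed.

Let dynkin_flip_invariant : dynkin flip_invariant.
Proof.
split.
- by rewrite /flip_invariant /= !preimage_setT; split => //; exact: measurableT.
- move=> A [mA mA' PA]; rewrite /flip_invariant /= -!preimage_setC.
  by split; [exact: measurableC | exact: measurableC | rewrite !probability_setC // PA].
- move=> F tF hF; rewrite /flip_invariant /= !preimage_bigcup; split.
  + by apply: bigcupT_measurable => k; case: (hF k).
  + by apply: bigcupT_measurable => k; case: (hF k).
  rewrite !measure_bigcup; try by [move=> k _; case: (hF k) | exact: trivIset_preimage].
  by apply: eq_eseriesr => k _; case: (hF k).
Qed.

Let sigma_boxes_flip_invariant : <<s boxes >> `<=` flip_invariant.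
Proof.
rewrite -setI_closed_g_dynkin_g_sigma_algebra.
  by apply: smallest_sub; [exact: dynkin_flip_invariant | exact: boxes_flip_invariant].
move=> _ _ [r ->] [r' ->]; exists (fun l => Num.min (r l) (r' l)).
apply/seteqP; split => f /=; first by move=> [h1 h2] l; rewrite lt_min h1 h2.
by move=> h; split => l; have := h l; rewrite lt_min => /andP [].
Qed.

Variables (c : 'I_n -> R) (q : R).
Hypothesis c_ge0 : forall l, 0 <= c l.

(* The half-space is the union of the boxes with rational corners [r]
   satisfying [sum_l c_l r_l < q]; this uses [c >= 0]. *)
Let halfspace_sigma_boxes : <<s boxes >> [set f | \sum_(l < n) c l * f l < q].
Proof.
have [s0 sC sU] := smallest_sigma_algebra setT boxes.
pose F (k : nat) : set ('I_n -> R) :=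
  if (unpickle k : option {ffun 'I_n -> rat}) is Some rho then
    (if \sum_(l < n) c l * ratr (rho l) < q then box (fun l => ratr (rho l)) else set0)
  else set0.
suff -> : [set f | \sum_(l < n) c l * f l < q] = \bigcup_k F k.
  apply: sU => k; rewrite /F; case: unpickle => [rho|]; last exact: s0.
  case: ifP => _; last exact: s0.
  by apply: sub_gen_smallest; exists (fun l => ratr (rho l)).
apply/seteqP; split => f /=; last first.
  move=> [k _]; rewrite /F; case: unpickle => [rho|//]; case: ifP => // hq hb.
  apply: le_lt_trans hq; apply: ler_sum => l _; apply: ler_wpM2l; first exact: c_ge0.
  exact/ltW/hb.
move=> hf; set S := \sum_(l < n) c l; set sf := \sum_(l < n) c l * f l in hf.
have hS : 0 <= S by apply: sumr_ge0 => l _; exact: c_ge0.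
set eta := (q - sf) / (1 + S).
have eta_gt0 : 0 < eta by apply: divr_gt0; lra.
have etaE : eta * (1 + S) = q - sf by rewrite /eta divfK //; lra.
have : forall l, exists r : rat, f l < ratr r < f l + eta.
  move=> l; have [r] := @rat_in_itvoo R (f l) (f l + eta) ltac:(lra).
  by rewrite in_itv /= => h; exists r.
case/fin_all_exists => g hg.
exists (pickle [ffun l => g l]) => //; rewrite /F pickleK.
have -> : \sum_(l < n) c l * ratr ([ffun l => g l] l) < q.
  apply: (@le_lt_trans _ _ (\sum_(l < n) c l * (f l + eta))).
    apply: ler_sum => l _; rewrite ffunE; apply: ler_wpM2l; first exact: c_ge0.
    by case/andP: (hg l) => _ /ltW.
  under eq_bigr => l _ do rewrite mulrDr.
  rewrite big_split /= -mulr_suml -/sf -/S.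
  have : S * eta < eta * (1 + S) by nra.
  lra.
by move=> l; rewrite ffunE; case/andP: (hg l).
Qed.

Lemma sign_flip_halfspace :
  [/\ measurable [set t | \sum_(l < n) c l * z l t < q],
      measurable [set t | \sum_(l < n) c l * (sg l * z l t) < q] &
      P [set t | \sum_(l < n) c l * z l t < q] =
      P [set t | \sum_(l < n) c l * (sg l * z l t) < q]].
Proof. exact: (sigma_boxes_flip_invariant halfspace_sigma_boxes). Qed.

End SignFlip.

Lemma prob_le_of_equiprobable_cover (R : realType) (d : measure_display)
    (T : measurableType d) (P : probability T R) (I : eqType) (s : seq I)
    (F : I -> set T) (E : set T) (K : R) :
  (0 < size s)%N -> measurable E ->
  (forall i, i \in s -> measurable (F i) /\ P (F i) = P E) ->
  (forall t, (count (fun i => t \in F i) s)%:R <= K) ->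
  (P E <= (K / (size s)%:R)%:E)%E.
Proof.
move=> s_gt0 mE hF hK.
pose G i := if i \in s then F i else set0.
have mG i : measurable (G i).
  by rewrite /G; case: ifP => [/hF[]|_] //; exact: measurable0.
have PG i : i \in s -> P (G i) = P E by rewrite /G => si; rewrite si; case: (hF i si).
have countE t :
    (\sum_(i <- s) (\1_(G i) t : R)%:E)%E = ((count (fun i => t \in F i) s)%:R : R)%:E.
  rewrite sumEFin -sum1_count natr_sum [in RHS]big_mkcond; congr _%:E.
  apply: eq_big_seq => i si; rewrite indicE /G si; by case: (t \in F i).
have sumPG : (\sum_(i <- s) P (G i) <= K%:E)%E.
  rewrite (eq_bigr (fun i => \int[P]_(t in setT) (\1_(G i) t)%:E)%E); last first.
    by move=> i _; rewrite integral_indic // setIT.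
  rewrite -ge0_integral_sum //; last first.
    by move=> i; apply/measurable_EFinP; exact: measurable_indic.
  apply: (@le_trans _ _ (\int[P]_(t in setT) (cst K%:E t))%E).
    apply: ge0_le_integral => //.
    - by move=> t _; apply: sume_ge0 => i _; rewrite lee_fin indicE ler0n.
    - by apply: emeasurable_sum => i; apply/measurable_EFinP; exact: measurable_indic.
    - by move=> t _; rewrite countE lee_fin.
  by rewrite integral_cst // [X in (_ * X <= _)%E]probability_setT mule1.
have fE : P E \is a fin_num := fin_num_measure P E mE.
rewrite big_seq (eq_bigr _ PG) -big_seq -(fineK fE) sumEFin big_const_seq count_predT in sumPG.
rewrite iter_addr_0 -mulr_natr lee_fin in sumPG.
by rewrite -(fineK fE) lee_fin ler_pdivlMr // ltr0n.
Qed.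

Lemma weighted_sum_lt_Bbound (R : realType) (d : measure_display)
    (T : measurableType d) (P : probability T R) n (z : 'I_n -> {RV P >-> R})
    (c : 'I_n -> R) p :
  mutually_independent z -> (forall l, symmetric_rv (z l)) ->
  (forall l t, -1 <= z l t <= 1) -> (forall l, 0 <= c l <= 1) -> 0 <= p ->
  (P [set t | (\sum_(l < n) c l * z l t < - p)%R] <= (Bbound n p)%:E)%E.
Proof.
move=> z_indep z_sym z_bd c_bd hp.
have c_ge0 l : 0 <= c l by case/andP: (c_bd l).
pose F (e : seq R) := [set t | \sum_(l < n) c l * (nth 0 e l * z l t) < - p].
have flip e : e \in sign_vectors R n -> measurable (F e) /\
    P (F e) = P [set t | \sum_(l < n) c l * z l t < - p].
  case/sign_vectorsP => _ e_pm.
  by have [] := sign_flip_halfspace z_indep z_sym (fun l => e_pm l (ltn_ord l)) (- p) c_ge0.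
rewrite Bbound_binom_tail // -natrX -(size_sign_vectors R n).
apply: prob_le_of_equiprobable_cover flip _ => //.
- by rewrite size_sign_vectors expn_gt0.
- by have [] := sign_flip_halfspace z_indep z_sym (sg := fun=> 1) (fun=> or_introl erefl) (- p) c_ge0.
move=> t; rewrite (eq_count (a2 := fun e => p < \sum_(l < n) nth 0 e l * - (c l * z l t))).
  apply: count_sign_vectors_gt_le hp => l; rewrite normrN normrM ger0_norm //.
  have [c_lo c_hi] := andP (c_bd l); have [z_lo z_hi] := andP (z_bd l t).
  have : `|z l t| <= 1 by rewrite ler_norml z_lo z_hi.
  by nra.
move=> e; have memF : (t \in F e) = (\sum_(l < n) c l * (nth 0 e l * z l t) < - p).
  by apply/idP/idP => /[!inE].
rewrite memF ltrNr -sumrN; congr (_ < _); apply: eq_bigr => l _.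
by rewrite mulrCA mulrN.
Qed.

Lemma weighted_center_rowE (R : realType) m n (A : 'M[R]_(m, n)) (b w : 'cV[R]_m)
    (x : 'cV[R]_n) (y s : 'cV[R]_m) i :
  weighted_center A b w x y s ->
  (A *m x) i 0 = b i 0 - s i 0 /\ y i 0 = w i 0 / s i 0.
Proof.
case=> hb s_gt0 _ sy; split.
  by rewrite -hb [(_ + s) i 0]mxE addrK.
by rewrite -sy mulrAC divff ?mul1r // gt_eqF.
Qed.

Lemma norm1_gt0 (R : realType) N (v : 'I_N -> R) l : v l != 0 -> 0 < norm1 v.
Proof.
move=> vl; rewrite /norm1 (bigD1 l) //= ltr_pwDl ?normr_gt0 //.
by apply: sumr_ge0 => j _.
Qed.

Lemma le_maxentry (R : realType) N (v : 'I_N -> R) l : v l <= maxentry v.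
Proof. exact: le_bigmax. Qed.

Theorem mainTheorem20 (R : realType) (m n : nat) (A : 'M[R]_(m, n)) (b0 : 'cV[R]_m)
  (d : measure_display) (T : measurableType d) (P : probability T R)
  (N : 'I_m -> nat) (db : forall i : 'I_m, 'I_(N i) -> R)
  (z : forall i : 'I_m, 'I_(N i) -> {RV P >-> R})
  (w : 'cV[R]_m) (x : 'cV[R]_n) (y s : 'cV[R]_m) :
  (n <= m)%N ->
  \rank A = n ->
  poly_bounded A b0 ->
  poly_nonempty_interior A b0 ->
  (forall i l, 0 <= db i l) ->
  (forall i, exists l, db i l != 0) ->
  (forall i, 0 < w i 0) ->
  \sum_(i < m) w i 0 = 1 ->
  weighted_center A b0 w x y s ->
  (forall i, mutually_independent (z i)) ->
  (forall i l, symmetric_rv (z i l)) ->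
  (forall i l t, -1 <= z i l t <= 1) ->
  forall i : 'I_m,
    let delta := w i 0 / (y i 0 * norm1 (db i)) in
    (P [set t | ((A *m x) i 0 > b0 i 0 + \sum_(l < N i) db i l * z i l t)%R] <=
      (Bbound (N i) (delta * norm1 (db i) / maxentry (db i)))%:E)%E.
Proof.
move=> _ _ _ _ db_ge0 db_nz w_gt0 _ wc z_indep z_sym z_bd i /=.
have [Axi yi] := weighted_center_rowE i wc.
have s_gt0 : 0 < s i 0 by case: wc.
have [l0 dbl0] := db_nz i; set M := maxentry (db i).
have M_gt0 : 0 < M.
  by apply: lt_le_trans (le_maxentry _ l0); rewrite lt_neqAle eq_sym dbl0 db_ge0.
have nrm_gt0 := norm1_gt0 dbl0.
have -> : w i 0 / (y i 0 * norm1 (db i)) * norm1 (db i) / M = s i 0 / M.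
  by rewrite yi; congr (_ / _); field; rewrite !gt_eqF.
have -> : [set t | b0 i 0 + \sum_(l < N i) db i l * z i l t < (A *m x) i 0] =
    [set t | \sum_(l < N i) db i l / M * z i l t < - (s i 0 / M)].
  have scaleE t : \sum_(l < N i) db i l / M * z i l t =
      (\sum_(l < N i) db i l * z i l t) / M.
    by rewrite mulr_suml; apply: eq_bigr => l _; rewrite mulrAC.
  by apply/seteqP; split => t /=; rewrite Axi scaleE -mulNr ltr_pM2r ?invr_gt0 //; lra.
apply: weighted_sum_lt_Bbound => //; last exact: divr_ge0 (ltW s_gt0) (ltW M_gt0).
move=> l; rewrite divr_ge0 ?db_ge0 ?(ltW M_gt0) //= ler_pdivrMr // mul1r.
exact: le_maxentry.
Qed.
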